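(* (Subject reduction for NLPCF.) If $\Gamma;\Delta\vdash e:\tau$ and $e\rightsquigarrow e'$, then $\Gamma;\Delta\vdash e':\tau$.
   Context: NLPCF is LPCF extended with non-determinism. Types: $\tau ::= \mathsf{Nat}\mid\mathsf{Bool}\mid \tau\,\&\,\tau' \mid \tau\otimes\tau' \mid \tau\multimap\tau' \mid \tau\to\tau'\mid\mathsf{T}\tau$. Terms: $e ::= x \mid \mathtt{0},\mathtt{1},\dots \mid \mathtt{succ}\mid\mathtt{pred}\mid\mathtt{iszero} \mid \lambda x.e \mid e\,e' \mid \mathtt{true}\mid\mathtt{false} \mid \mathtt{if}\ e_1\ \mathtt{then}\ e_2\ \mathtt{else}\ e_3 \mid \langle e_1,e_2\rangle \mid \mathtt{proj}_i(e) \mid \mathtt{fix}_\tau \mid e_1\otimes e_2 \mid \mathtt{let}\ x\otimes y = e\ \mathtt{in}\ e' \mid \mathtt{val}(e)\mid \mathtt{bind}\ x\Leftarrow e\ \mathtt{in}\ e'\mid e\sqcap e'$, up to $\alpha$-equivalence, with capture-avoiding substitution. Typing judgements $\Gamma;\Delta\vdash e:\tau$ ($\Gamma$ non-linear, $\Delta$ linear environments, disjoint domains; $\Delta,\Delta'$ disjoint union): $\Gamma;\emptyset\vdash x:\tau$ if $x:\tau\in\Gamma$; $\Gamma;x:\tau\vdash x:\tau$ if $x\notin\Gamma$; $\Gamma;\emptyset\vdash\mathtt{fix}_\tau:(\tau\to\tau)\to\tau$; numerals $:\mathsf{Nat}$, $\mathtt{true},\mathtt{false}:\mathsf{Bool}$,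 $\mathtt{succ},\mathtt{pred}:\mathsf{Nat}\multimap\mathsf{Nat}$, $\mathtt{iszero}:\mathsf{Nat}\multimap\mathsf{Bool}$ (all with empty $\Delta$); from $\Gamma;\Delta\vdash e_1:\mathsf{Bool}$, $\Gamma;\Delta'\vdash e_2:\tau$, $\Gamma;\Delta'\vdash e_3:\tau$ infer $\Gamma;\Delta,\Delta'\vdash\mathtt{if}\ e_1\ \mathtt{then}\ e_2\ \mathtt{else}\ e_3:\tau$; from $\Gamma;\Delta\vdash e_i:\tau_i$ infer $\Gamma;\Delta\vdash\langle e_1,e_2\rangle:\tau_1\&\tau_2$; from $\Gamma;\Delta\vdash e:\tau_1\&\tau_2$ infer $\Gamma;\Delta\vdash\mathtt{proj}_i(e):\tau_i$; from $\Gamma;\Delta_i\vdash e_i:\tau_i$ infer $\Gamma;\Delta_1,\Delta_2\vdash e_1\otimes e_2:\tau_1\otimes\tau_2$; from $\Gamma;\Delta,x:\tau_1,y:\tau_2\vdash e:\tau$ and $\Gamma;\Delta'\vdash e':\tau_1\otimes\tau_2$ infer $\Gamma;\Delta,\Delta'\vdash\mathtt{let}\ x\otimes y=e'\ \mathtt{in}\ e:\tau$; from $\Gamma,x:\tau;\Delta\vdash e:\tau'$ infer $\Gamma;\Delta\vdash\lambda x.e:\tau\to\tau'$; from $\Gamma;\Delta\vdash e:\tau'\to\tau$, $\Gamma;\emptyset\vdash e':\tau'$ infer $\Gamma;\Delta\vdash e\,e':\tau$; from $\Gamma;\Delta,x:\tau\vdash e:\tau'$ infer $\Gamma;\Delta\vdash\lambda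 x.e:\tau\multimap\tau'$; from $\Gamma;\Delta\vdash e:\tau'\multimap\tau$, $\Gamma;\Delta'\vdash e':\tau'$ infer $\Gamma;\Delta,\Delta'\vdash e\,e':\tau$; from $\Gamma;\Delta\vdash e:\tau$ infer $\Gamma;\Delta\vdash\mathtt{val}(e):\mathsf{T}\tau$; from $\Gamma;\emptyset\vdash e_1:\mathsf{T}\tau_1$ and $\Gamma,x:\tau_1;\Delta\vdash e_2:\mathsf{T}\tau_2$ infer $\Gamma;\Delta\vdash\mathtt{bind}\ x\Leftarrow e_1\ \mathtt{in}\ e_2:\mathsf{T}\tau_2$; from $\Gamma;\Delta\vdash e_1:\mathsf{T}\tau_1$ and $\Gamma;\Delta',x:\tau_1\vdash e_2:\mathsf{T}\tau_2$ infer $\Gamma;\Delta,\Delta'\vdash\mathtt{bind}\ x\Leftarrow e_1\ \mathtt{in}\ e_2:\mathsf{T}\tau_2$; from $\Gamma;\Delta\vdash e_i:\mathsf{T}\tau$ ($i=1,2$) infer $\Gamma;\Delta\vdash e_1\sqcap e_2:\mathsf{T}\tau$. One-step reduction $\rightsquigarrow$: least relation containing $(\lambda x.e)e'\rightsquigarrow e[e'/x]$; $\mathtt{fix}_\tau\,e\rightsquigarrow e(\mathtt{fix}_\tau\,e)$; $\mathtt{succ}\,n\rightsquigarrow n+1$; $\mathtt{pred}\,0\rightsquigarrow0$; $\mathtt{pred}\,n\rightsquigarrow n-1$ ($n\ge1$); $\mathtt{iszero}\,0\rightsquigarrow\mathtt{true}$; $\mathtt{iszero}\,n\rightsquigarrow\mathtt{false}$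 ($n\ge1$); $\mathtt{if}\ \mathtt{true}\ \mathtt{then}\ e_1\ \mathtt{else}\ e_2\rightsquigarrow e_1$; $\mathtt{if}\ \mathtt{false}\ \mathtt{then}\ e_1\ \mathtt{else}\ e_2\rightsquigarrow e_2$; $\mathtt{proj}_i\langle e_1,e_2\rangle\rightsquigarrow e_i$; $\mathtt{let}\ x\otimes y=e_1\otimes e_2\ \mathtt{in}\ e\rightsquigarrow e[e_1/x,e_2/y]$; $\mathtt{bind}\ x\Leftarrow\mathtt{val}(e')\ \mathtt{in}\ e\rightsquigarrow(\lambda x.e)e'$ when $e'\not\rightsquigarrow$; $e_1\sqcap e_2\rightsquigarrow e_i$ ($i=1,2$); closed under $\mathcal{E}[e_1]\rightsquigarrow\mathcal{E}[e_2]$ for evaluation contexts $\mathcal{E}::=[\,]\mid\mathtt{succ}(\mathcal{E})\mid\mathtt{pred}(\mathcal{E})\mid\mathtt{iszero}(\mathcal{E})\mid\mathcal{E}\,e\mid\mathtt{if}\ \mathcal{E}\ \mathtt{then}\ e_1\ \mathtt{else}\ e_2\mid\mathtt{proj}_i(\mathcal{E})\mid\mathtt{let}\ x\otimes y=\mathcal{E}\ \mathtt{in}\ e\mid\mathtt{bind}\ x\Leftarrow\mathcal{E}\ \mathtt{in}\ e\mid\mathtt{val}(\mathcal{E})$. *)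

(* Terms are represented with de Bruijn indices (= terms up to
   alpha-equivalence); substitution is the standard capture-avoiding
   parallel substitution on de Bruijn terms. *)
From Stdlib Require Import List Arith.
Import ListNotations.

Inductive ty : Type :=
  | TNat : ty
  | TBool : ty
  | TWith : ty -> ty -> ty
  | TTensor : ty -> ty -> ty
  | TLolli : ty -> ty -> ty
  | TArrow : ty -> ty -> ty
  | TMon : ty -> ty.

Inductive term : Type :=
  | Var : nat -> term
  | Num : nat -> term
  | Succ : term
  | Pred : term
  | IsZero : term
  | Lam : term -> term
  | App : term -> term -> term
  | Tt : term
  | Ff : term
  | If : term -> term -> term -> term
  | Pair : term -> term -> term
  | Proj1 : term -> term
  | Proj2 : term -> term
  | Fix : ty -> term
  | Tens : term -> term -> term
  | LetT : term -> term -> term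
      (* LetT e' e = let x (x) y = e' in e ;
         in e, index 1 is x and index 0 is y *)
  | Val : term -> term
  | Bind : term -> term -> term
      (* Bind e1 e2 = bind x <= e1 in e2 ; binds index 0 in e2 *)
  | Choice : term -> term -> term.

Definition scons {A : Type} (a : A) (f : nat -> A) (n : nat) : A :=
  match n with 0 => a | S m => f m end.

Definition upren (xi : nat -> nat) : nat -> nat := scons 0 (fun n => S (xi n)).

Fixpoint ren (xi : nat -> nat) (t : term) : term :=
  match t with
  | Var n => Var (xi n)
  | Num n => Num n
  | Succ => Succ
  | Pred => Pred
  | IsZero => IsZero
  | Lam e => Lam (ren (upren xi) e)
  | App a b => App (ren xi a) (ren xi b)
  | Tt => Tt
  | Ff => Ff
  | If a b c => If (ren xi a) (ren xi b) (ren xi c)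
  | Pair a b => Pair (ren xi a) (ren xi b)
  | Proj1 a => Proj1 (ren xi a)
  | Proj2 a => Proj2 (ren xi a)
  | Fix T => Fix T
  | Tens a b => Tens (ren xi a) (ren xi b)
  | LetT a e => LetT (ren xi a) (ren (upren (upren xi)) e)
  | Val a => Val (ren xi a)
  | Bind a e => Bind (ren xi a) (ren (upren xi) e)
  | Choice a b => Choice (ren xi a) (ren xi b)
  end.

Definition up (sigma : nat -> term) : nat -> term :=
  scons (Var 0) (fun n => ren S (sigma n)).

Fixpoint subst (sigma : nat -> term) (t : term) : term :=
  match t with
  | Var n => sigma n
  | Num n => Num n
  | Succ => Succ
  | Pred => Pred
  | IsZero => IsZero
  | Lam e => Lam (subst (up sigma) e)
  | App a b => App (subst sigma a) (subst sigma b)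
  | Tt => Tt
  | Ff => Ff
  | If a b c => If (subst sigma a) (subst sigma b) (subst sigma c)
  | Pair a b => Pair (subst sigma a) (subst sigma b)
  | Proj1 a => Proj1 (subst sigma a)
  | Proj2 a => Proj2 (subst sigma a)
  | Fix T => Fix T
  | Tens a b => Tens (subst sigma a) (subst sigma b)
  | LetT a e => LetT (subst sigma a) (subst (up (up sigma)) e)
  | Val a => Val (subst sigma a)
  | Bind a e => Bind (subst sigma a) (subst (up sigma) e)
  | Choice a b => Choice (subst sigma a) (subst sigma b)
  end.

Definition subst1 (e' e : term) : term := subst (scons e' Var) e.
(* e[e1/x, e2/y] for the body of LetT (x = index 1, y = index 0) *)
Definition subst2 (e1 e2 e : term) : term := subst (scons e2 (scons e1 Var)) e.

(* A de Bruijn environment records, for every index, whether it is a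
   non-linear variable (in Gamma), a linear variable (in Delta), or
   not available.  Gamma;Delta is thus a single list of slots. *)
Inductive slot : Type :=
  | SNon : ty -> slot
  | SLin : ty -> slot
  | SNone : slot.

Definition ctx := list slot.

Definition nolin (c : ctx) : Prop := forall x T, nth_error c x <> Some (SLin T).

Definition erase_slot (s : slot) : slot :=
  match s with SLin _ => SNone | s => s end.
Definition erase (c : ctx) : ctx := map erase_slot c.

(* Delta = Delta1, Delta2 (disjoint union), with the same Gamma *)
Inductive split_slot : slot -> slot -> slot -> Prop :=
  | split_non : forall T, split_slot (SNon T) (SNon T) (SNon T)
  | split_none : split_slot SNone SNone SNone
  | split_linl : forall T, split_slot (SLin T) (SLin T) SNone
  | split_linr : forall T, split_slot (SLin T) SNone (SLin T).

Inductive split : ctx -> ctx -> ctx -> Prop :=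
  | split_nil : split [] [] []
  | split_cons : forall s s1 s2 c c1 c2,
      split_slot s s1 s2 -> split c c1 c2 -> split (s :: c) (s1 :: c1) (s2 :: c2).

Inductive typed : ctx -> term -> ty -> Prop :=
  | T_VarN : forall c x T,
      nth_error c x = Some (SNon T) -> nolin c -> typed c (Var x) T
  | T_VarL : forall c x T,
      nth_error c x = Some (SLin T) ->
      (forall y U, y <> x -> nth_error c y <> Some (SLin U)) ->
      typed c (Var x) T
  | T_Fix : forall c T, nolin c -> typed c (Fix T) (TArrow (TArrow T T) T)
  | T_Num : forall c n, nolin c -> typed c (Num n) TNat
  | T_True : forall c, nolin c -> typed c Tt TBool
  | T_False : forall c, nolin c -> typed c Ff TBool
  | T_Succ : forall c, nolin c -> typed c Succ (TLolli TNat TNat)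
  | T_Pred : forall c, nolin c -> typed c Pred (TLolli TNat TNat)
  | T_IsZero : forall c, nolin c -> typed c IsZero (TLolli TNat TBool)
  | T_If : forall c c1 c2 e1 e2 e3 T,
      split c c1 c2 -> typed c1 e1 TBool -> typed c2 e2 T -> typed c2 e3 T ->
      typed c (If e1 e2 e3) T
  | T_Pair : forall c e1 e2 T1 T2,
      typed c e1 T1 -> typed c e2 T2 -> typed c (Pair e1 e2) (TWith T1 T2)
  | T_Proj1 : forall c e T1 T2, typed c e (TWith T1 T2) -> typed c (Proj1 e) T1
  | T_Proj2 : forall c e T1 T2, typed c e (TWith T1 T2) -> typed c (Proj2 e) T2
  | T_Tens : forall c c1 c2 e1 e2 T1 T2,
      split c c1 c2 -> typed c1 e1 T1 -> typed c2 e2 T2 ->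
      typed c (Tens e1 e2) (TTensor T1 T2)
  | T_Let : forall c c1 c2 e e' T1 T2 T,
      split c c1 c2 -> typed (SLin T2 :: SLin T1 :: c1) e T ->
      typed c2 e' (TTensor T1 T2) -> typed c (LetT e' e) T
  | T_LamN : forall c e T T',
      typed (SNon T :: c) e T' -> typed c (Lam e) (TArrow T T')
  | T_AppN : forall c e e' T T',
      typed c e (TArrow T' T) -> typed (erase c) e' T' -> typed c (App e e') T
  | T_LamL : forall c e T T',
      typed (SLin T :: c) e T' -> typed c (Lam e) (TLolli T T')
  | T_AppL : forall c c1 c2 e e' T T',
      split c c1 c2 -> typed c1 e (TLolli T' T) -> typed c2 e' T' ->
      typed c (App e e') T
  | T_Val : forall c e T, typed c e T -> typed c (Val e) (TMon T)
  | T_BindN : forall c e1 e2 T1 T2,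
      typed (erase c) e1 (TMon T1) -> typed (SNon T1 :: c) e2 (TMon T2) ->
      typed c (Bind e1 e2) (TMon T2)
  | T_BindL : forall c c1 c2 e1 e2 T1 T2,
      split c c1 c2 -> typed c1 e1 (TMon T1) -> typed (SLin T1 :: c2) e2 (TMon T2) ->
      typed c (Bind e1 e2) (TMon T2)
  | T_Choice : forall c e1 e2 T,
      typed c e1 (TMon T) -> typed c e2 (TMon T) -> typed c (Choice e1 e2) (TMon T).

(* the redex rules other than the bind rule (which has a negative side
   condition and is handled in [step] below) *)
Inductive head : term -> term -> Prop :=
  | H_beta : forall e e', head (App (Lam e) e') (subst1 e' e)
  | H_fix : forall T e, head (App (Fix T) e) (App e (App (Fix T) e))
  | H_succ : forall n, head (App Succ (Num n)) (Num (S n))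
  | H_pred0 : head (App Pred (Num 0)) (Num 0)
  | H_predS : forall n, head (App Pred (Num (S n))) (Num n)
  | H_iszero0 : head (App IsZero (Num 0)) Tt
  | H_iszeroS : forall n, head (App IsZero (Num (S n))) Ff
  | H_iftrue : forall e1 e2, head (If Tt e1 e2) e1
  | H_iffalse : forall e1 e2, head (If Ff e1 e2) e2
  | H_proj1 : forall e1 e2, head (Proj1 (Pair e1 e2)) e1
  | H_proj2 : forall e1 e2, head (Proj2 (Pair e1 e2)) e2
  | H_let : forall e1 e2 e, head (LetT (Tens e1 e2) e) (subst2 e1 e2 e)
  | H_choice1 : forall e1 e2, head (Choice e1 e2) e1
  | H_choice2 : forall e1 e2, head (Choice e1 e2) e2.

(* Because the bind rule has the negative premise
   "e' does not reduce" on a proper subterm, it is defined by structural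
   recursion on e (closure under E[.] = closure under each one-frame context). *)
Fixpoint step (t t' : term) {struct t} : Prop :=
  head t t' \/
  match t with
  | App a b =>
      (exists a', step a a' /\ t' = App a' b) \/
      ((a = Succ \/ a = Pred \/ a = IsZero) /\ exists b', step b b' /\ t' = App a b')
  | If a e1 e2 => exists a', step a a' /\ t' = If a' e1 e2
  | Proj1 a => exists a', step a a' /\ t' = Proj1 a'
  | Proj2 a => exists a', step a a' /\ t' = Proj2 a'
  | LetT a e => exists a', step a a' /\ t' = LetT a' e
  | Bind a e =>
      (exists a', step a a' /\ t' = Bind a' e) \/
      match a with
      | Val v => (~ exists v', step v v') /\ t' = App (Lam e) v
      | _ => False
      end
  | Val a => exists a', step a a' /\ t' = Val a'
  | _ => False
  end.

From Stdlib Require Import List Arith Lia.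
Import ListNotations.

(* Subject reduction is the usual syntactic argument, with linearity tracked
   by context splitting.  Weakening by a non-linear slot and substitution are
   proved at an arbitrary de Bruijn depth; substituting for a linear variable
   merges the context of the substituted term into the remaining one by a
   disjoint union, while a non-linear variable may only be replaced by a term
   typable without linear resources.  Every redex contraction is then an
   instance of substitution (beta, let, bind) or a direct inversion, and
   evaluation contexts are handled by induction on the term. *)

(** * Renaming and substitution *)

Lemma upren_ext xi zeta :
  (forall n, xi n = zeta n) -> forall n, upren xi n = upren zeta n.
Proof. intros H [|n]; cbn; rewrite ?H; reflexivity. Qed.

Lemma ren_ext : forall t xi zeta,
  (forall n, xi n = zeta n) -> ren xi t = ren zeta t.
Proof.
  induction t; intros xi zeta H; simpl; f_equal; auto using upren_ext.
Qed.

Lemma ren_ren : forall t xi zeta,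
  ren xi (ren zeta t) = ren (fun n => xi (zeta n)) t.
Proof.
  induction t; intros xi zeta; simpl; f_equal; auto;
    rewrite ?IHt, ?IHt2; apply ren_ext; intros [|[|n]]; reflexivity.
Qed.

Lemma ren_id : forall t xi, (forall n, xi n = n) -> ren xi t = t.
Proof.
  assert (Hup : forall xi, (forall n, xi n = n) -> forall n, upren xi n = n).
  { intros xi H [|n]; cbn; rewrite ?H; reflexivity. }
  induction t; intros xi H; simpl; f_equal; auto.
Qed.

Lemma up_ext sigma tau :
  (forall n, sigma n = tau n) -> forall n, up sigma n = up tau n.
Proof. intros H [|n]; cbn; rewrite ?H; reflexivity. Qed.

Lemma subst_ext : forall t sigma tau,
  (forall n, sigma n = tau n) -> subst sigma t = subst tau t.
Proof.
  induction t; intros sigma tau H; simpl; f_equal; auto using up_ext.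
Qed.

Lemma subst_ren : forall t sigma xi,
  subst sigma (ren xi t) = subst (fun n => sigma (xi n)) t.
Proof.
  induction t; intros sigma xi; simpl; f_equal; auto;
    rewrite ?IHt, ?IHt2; apply subst_ext; intros [|[|n]]; reflexivity.
Qed.

Lemma ren_up xi sigma n :
  ren (upren xi) (up sigma n) = up (fun n => ren xi (sigma n)) n.
Proof. destruct n; cbn; rewrite ?ren_ren; reflexivity. Qed.

Lemma ren_subst : forall t xi sigma,
  ren xi (subst sigma t) = subst (fun n => ren xi (sigma n)) t.
Proof.
  induction t; intros xi sigma; simpl; f_equal; auto;
    rewrite ?IHt, ?IHt2; apply subst_ext; intros n; rewrite ?ren_up;
    auto using up_ext, ren_up.
Qed.

Lemma subst_up sigma tau n :
  subst (up sigma) (up tau n) = up (fun n => subst sigma (tau n)) n.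
Proof. destruct n; cbn; rewrite ?subst_ren, ?ren_subst; reflexivity. Qed.

Lemma subst_subst : forall t sigma tau,
  subst sigma (subst tau t) = subst (fun n => subst sigma (tau n)) t.
Proof.
  induction t; intros sigma tau; simpl; f_equal; auto;
    rewrite ?IHt, ?IHt2; apply subst_ext; intros n; rewrite ?subst_up;
    auto using up_ext, subst_up.
Qed.

Lemma subst_id : forall t sigma, (forall n, sigma n = Var n) -> subst sigma t = t.
Proof.
  assert (Hup : forall sigma, (forall n, sigma n = Var n) -> forall n, up sigma n = Var n).
  { intros sigma H [|n]; cbn; rewrite ?H; reflexivity. }
  induction t; intros sigma H; simpl; f_equal; auto.
Qed.

Lemma subst2_subst1 e1 e2 e :
  subst2 e1 e2 e = subst1 e1 (subst1 (ren S e2) e).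
Proof.
  unfold subst2, subst1. rewrite subst_subst. apply subst_ext. intros [|n]; cbn.
  - rewrite subst_ren. symmetry. apply subst_id. reflexivity.
  - reflexivity.
Qed.

(* Being
   iterates of [upren] and [up], [shift_at] and [upn] commute with binders by
   conversion: [upren (shift_at k)] is [shift_at (S k)]. *)
Definition shift_at (k : nat) : nat -> nat := Nat.iter k upren S.

Definition upn (k : nat) (sigma : nat -> term) : nat -> term := Nat.iter k up sigma.

Lemma shift_at_spec k y : shift_at k y = if y <? k then y else S y.
Proof.
  revert y; induction k as [|k IHk]; intros [|y]; try reflexivity.
  change (S (shift_at k y) = if y <? k then S y else S (S y)).
  rewrite IHk. destruct (y <? k); reflexivity.
Qed.

Lemma shift_at_neq k y : shift_at k y <> k.
Proof. rewrite shift_at_spec. destruct (Nat.ltb_spec y k); lia. Qed.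

Lemma shift_at_inj k y y' : shift_at k y = shift_at k y' -> y = y'.
Proof.
  rewrite !shift_at_spec. destruct (Nat.ltb_spec y k), (Nat.ltb_spec y' k); lia.
Qed.

Lemma shift_at_cover k z : z = k \/ exists y, z = shift_at k y.
Proof.
  destruct (Nat.lt_total z k) as [H|[H|H]].
  - right. exists z. rewrite shift_at_spec. destruct (Nat.ltb_spec z k); lia.
  - left. exact H.
  - right. exists (pred z). rewrite shift_at_spec. destruct (Nat.ltb_spec (pred z) k); lia.
Qed.

Lemma nth_error_shift_at {A} (pre c : list A) s y :
  nth_error (pre ++ s :: c) (shift_at (length pre) y) = nth_error (pre ++ c) y.
Proof.
  rewrite shift_at_spec. destruct (Nat.ltb_spec y (length pre)).
  - rewrite !nth_error_app1; auto.
  - rewrite !nth_error_app2 by lia.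
    replace (S y - length pre) with (S (y - length pre)) by lia. reflexivity.
Qed.

Lemma nth_error_at_length {A} (pre c : list A) s :
  nth_error (pre ++ s :: c) (length pre) = Some s.
Proof. rewrite nth_error_app2, Nat.sub_diag; reflexivity. Qed.

Lemma upn_shift_at k v y : upn k (scons v Var) (shift_at k y) = Var y.
Proof.
  revert y; induction k as [|k IHk]; intros [|y]; try reflexivity.
  change (ren S (upn k (scons v Var) (shift_at k y)) = Var (S y)).
  rewrite IHk. reflexivity.
Qed.

Lemma upn_at k v : upn k (scons v Var) k = ren (Nat.add k) v.
Proof.
  induction k as [|k IHk].
  - symmetry. apply ren_id. reflexivity.
  - change (ren S (upn k (scons v Var) k) = ren (Nat.add (S k)) v).
    rewrite IHk, ren_ren. reflexivity.
Qed.

(** * Contexts and their splittings *)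

Definition nonlin (s : slot) : Prop := forall T, s <> SLin T.

Lemma nonlin_split_slot s : nonlin s -> split_slot s s s.
Proof. intros H; destruct s; try constructor. exfalso; eapply H; eauto. Qed.

Lemma nonlin_erase_slot s : nonlin s -> erase_slot s = s.
Proof. intros H; destruct s; auto. exfalso; eapply H; eauto. Qed.

Lemma nolin_cons s c : nolin (s :: c) -> nonlin s /\ nolin c.
Proof.
  intros H; split.
  - intros T ->. exact (H 0 T eq_refl).
  - intros x T. exact (H (S x) T).
Qed.

Lemma nolin_insert pre c s : nolin (pre ++ c) -> nonlin s -> nolin (pre ++ s :: c).
Proof.
  intros H Hs z T. destruct (shift_at_cover (length pre) z) as [->|[y ->]].
  - rewrite nth_error_at_length. intros E; injection E; apply Hs.
  - rewrite nth_error_shift_at. apply H.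
Qed.

Lemma nolin_remove pre c s : nolin (pre ++ s :: c) -> nolin (pre ++ c).
Proof. intros H z T. rewrite <- (nth_error_shift_at pre c s). apply H. Qed.

Lemma nolin_middle pre c s : nolin (pre ++ s :: c) -> nonlin s.
Proof. intros H T ->. apply (H (length pre) T), nth_error_at_length. Qed.

Lemma nolin_app pre c : nolin (pre ++ c) -> nolin pre /\ nolin c.
Proof.
  intros H; split; intros x T E.
  - apply (H x T). rewrite nth_error_app1; auto. apply nth_error_Some. congruence.
  - apply (H (length pre + x) T). rewrite nth_error_app2 by lia.
    rewrite Nat.add_comm, Nat.add_sub. exact E.
Qed.

Lemma erase_nolin c : nolin c -> erase c = c.
Proof.
  induction c as [|s c IHc]; intros H; simpl; auto.
  destruct (nolin_cons _ _ H). rewrite nonlin_erase_slot, IHc; auto.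
Qed.

Lemma nolin_erase c : nolin (erase c).
Proof.
  intros x T. unfold erase. rewrite nth_error_map.
  destruct (nth_error c x) as [[]|]; simpl; congruence.
Qed.

Lemma erase_idem c : erase (erase c) = erase c.
Proof. apply erase_nolin, nolin_erase. Qed.

Lemma erase_app a b : erase (a ++ b) = erase a ++ erase b.
Proof. apply map_app. Qed.

Lemma erase_length c : length (erase c) = length c.
Proof. apply length_map. Qed.

Lemma erase_insert pre s c : nonlin s -> erase (pre ++ s :: c) = erase pre ++ s :: erase c.
Proof. intros Hs. rewrite erase_app. simpl. rewrite nonlin_erase_slot; auto. Qed.

Lemma split_length c c1 c2 : split c c1 c2 -> length c1 = length c /\ length c2 = length c.
Proof. induction 1; simpl; intuition. Qed.

Lemma split_app a a1 a2 b b1 b2 :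
  split a a1 a2 -> split b b1 b2 -> split (a ++ b) (a1 ++ b1) (a2 ++ b2).
Proof. induction 1; intros; simpl; auto. constructor; auto. Qed.

Lemma split_app_inv pre c q1 q2 : split (pre ++ c) q1 q2 ->
  exists p1 p2 c1 c2, q1 = p1 ++ c1 /\ q2 = p2 ++ c2 /\
    split pre p1 p2 /\ split c c1 c2.
Proof.
  revert q1 q2; induction pre as [|s pre IHpre]; intros q1 q2 H; simpl in *.
  - exists [], [], q1, q2. repeat split; auto. constructor.
  - inversion H as [|? s1 s2 ? r1 r2 Hs Hr]; subst.
    destruct (IHpre _ _ Hr) as (p1 & p2 & c1 & c2 & -> & -> & S1 & S2).
    exists (s1 :: p1), (s2 :: p2), c1, c2. repeat split; auto. constructor; auto.
Qed.

Lemma split_comm c c1 c2 : split c c1 c2 -> split c c2 c1.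
Proof. induction 1; constructor; auto. inversion H; constructor. Qed.

Lemma split_nolin_l c c1 c2 : split c c1 c2 -> nolin c1 -> c = c2.
Proof.
  induction 1 as [|s s1 s2 c c1 c2 Hs Hc IHc]; intros N; auto.
  destruct (nolin_cons _ _ N) as [Ns1 Nc1].
  rewrite IHc by exact Nc1. inversion Hs; subst; auto. exfalso; eapply Ns1; eauto.
Qed.

Lemma split_assoc c c1 c2 r1 r2 : split c c1 c2 -> split c1 r1 r2 ->
  exists c', split c c' r2 /\ split c' r1 c2.
Proof.
  intros H; revert r1 r2; induction H as [|s s1 s2 c c1 c2 Hs Hc IHc]; intros r1 r2 H1.
  - inversion H1; subst. exists []; split; constructor.
  - inversion H1 as [|? t1 t2 ? q1 q2 Ht Hq]; subst.
    destruct (IHc _ _ Hq) as (c' & A & B).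
    inversion Hs; subst; inversion Ht; subst;
      first [ exists (SNone :: c'); solve [split; constructor; auto; constructor]
            | exists (SNon T :: c'); solve [split; constructor; auto; constructor]
            | exists (SLin T :: c'); solve [split; constructor; auto; constructor] ].
Qed.

Lemma split_erase c c1 c2 : split c c1 c2 -> erase c1 = erase c /\ erase c2 = erase c.
Proof.
  induction 1 as [|s s1 s2 c c1 c2 Hs Hc [E1 E2]]; simpl; auto.
  rewrite E1, E2. inversion Hs; subst; auto.
Qed.

Lemma split_insert pre c q1 q2 s : split (pre ++ c) q1 q2 -> nonlin s ->
  exists p1 p2 c1 c2, q1 = p1 ++ c1 /\ q2 = p2 ++ c2 /\
    length p1 = length pre /\ length p2 = length pre /\
    split (pre ++ s :: c) (p1 ++ s :: c1) (p2 ++ s :: c2).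
Proof.
  intros H Hs. destruct (split_app_inv _ _ _ _ H) as (p1 & p2 & c1 & c2 & -> & -> & S1 & S2).
  destruct (split_length _ _ _ S1) as [L1 L2].
  exists p1, p2, c1, c2. repeat split; auto.
  apply split_app; auto. constructor; auto. apply nonlin_split_slot, Hs.
Qed.

(** * Weakening and substitution *)

Lemma weaken_at c t T : typed c t T -> forall pre d s, c = pre ++ d -> nonlin s ->
  typed (pre ++ s :: d) (ren (shift_at (length pre)) t) T.
Proof.
  induction 1; intros pre d s0 -> Hs; simpl;
    try solve [constructor; apply nolin_insert; auto | econstructor; eauto].
  - apply T_VarN; [rewrite nth_error_shift_at; auto | apply nolin_insert; auto].
  - apply T_VarL; [rewrite nth_error_shift_at; auto|].
    intros y U Hy. destruct (shift_at_cover (length pre) y) as [->|[y' ->]].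
    + rewrite nth_error_at_length. intros E; injection E; apply Hs.
    + rewrite nth_error_shift_at. apply H0. intros ->; auto.
  - destruct (split_insert _ _ _ _ _ H Hs) as (p1 & p2 & d1 & d2 & -> & -> & L1 & L2 & Sp).
    apply T_If with (1 := Sp); [rewrite <- L1 | rewrite <- L2 ..]; auto.
  - destruct (split_insert _ _ _ _ _ H Hs) as (p1 & p2 & d1 & d2 & -> & -> & L1 & L2 & Sp).
    apply T_Tens with (1 := Sp); [rewrite <- L1 | rewrite <- L2]; auto.
  - destruct (split_insert _ _ _ _ _ H Hs) as (p1 & p2 & d1 & d2 & -> & -> & L1 & L2 & Sp).
    eapply T_Let with (1 := Sp); [rewrite <- L1 | rewrite <- L2; auto].
    exact (IHtyped1 (SLin T2 :: SLin T1 :: p1) d1 s0 eq_refl Hs).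
  - constructor. exact (IHtyped (SNon T :: pre) d s0 eq_refl Hs).
  - apply T_AppN with T'; auto.
    rewrite erase_insert, <- (erase_length pre) by exact Hs.
    apply IHtyped2; auto. apply erase_app.
  - constructor. exact (IHtyped (SLin T :: pre) d s0 eq_refl Hs).
  - destruct (split_insert _ _ _ _ _ H Hs) as (p1 & p2 & d1 & d2 & -> & -> & L1 & L2 & Sp).
    eapply T_AppL with (1 := Sp); [rewrite <- L1 | rewrite <- L2]; auto.
  - apply T_BindN with T1.
    + rewrite erase_insert, <- (erase_length pre) by exact Hs.
      apply IHtyped1; auto. apply erase_app.
    + exact (IHtyped2 (SNon T1 :: pre) d s0 eq_refl Hs).
  - destruct (split_insert _ _ _ _ _ H Hs) as (p1 & p2 & d1 & d2 & -> & -> & L1 & L2 & Sp).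
    eapply T_BindL with (1 := Sp); [rewrite <- L1; auto | rewrite <- L2].
    exact (IHtyped2 (SLin T1 :: p2) d2 s0 eq_refl Hs).
Qed.

Lemma weaken c t T s : typed c t T -> nonlin s -> typed (s :: c) (ren S t) T.
Proof. intros H Hs. exact (weaken_at _ _ _ H [] c s eq_refl Hs). Qed.

Lemma weaken_nolin pre c t T : typed c t T -> nolin pre ->
  typed (pre ++ c) (ren (Nat.add (length pre)) t) T.
Proof.
  revert t; induction pre as [|s pre IHpre]; intros t H N; simpl.
  - rewrite ren_id; auto.
  - destruct (nolin_cons _ _ N) as [Ns Npre].
    pose proof (weaken _ _ _ _ (IHpre _ H Npre) Ns) as W.
    rewrite ren_ren in W. exact W.
Qed.

(* [subst_ctx s c1 c v]: substituting [v] for a variable of slot [s] sitting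
   in front of [c1] leaves a term typed in [c].  A linear variable hands its
   share of the context over to [v]; a non-linear one requires [v] to use no
   linear variable at all. *)
Definition subst_ctx (s : slot) (c1 c : ctx) (v : term) : Prop :=
  match s with
  | SNone => c = c1
  | SNon U => c = c1 /\ typed (erase c1) v U
  | SLin U => exists c2, split c c1 c2 /\ typed c2 v U
  end.

Lemma subst_ctx_nonlin s c1 c v : subst_ctx s c1 c v -> nonlin s -> c = c1.
Proof. destruct s; simpl; intros H N; try tauto. exfalso; eapply N; eauto. Qed.

Lemma nolin_subst_ctx pre s c1 c v :
  nolin (pre ++ s :: c1) -> subst_ctx s c1 c v -> nolin (pre ++ c).
Proof.
  intros N R. rewrite (subst_ctx_nonlin _ _ _ _ R (nolin_middle _ _ _ N)).
  exact (nolin_remove _ _ _ N).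
Qed.

Lemma subst_ctx_split s c1 c v s1 s2 r1 r2 :
  subst_ctx s c1 c v -> split_slot s s1 s2 -> split c1 r1 r2 ->
  exists c' c'', subst_ctx s1 r1 c' v /\ subst_ctx s2 r2 c'' v /\ split c c' c''.
Proof.
  intros R Hs Sp. inversion Hs; subst; simpl in R.
  - destruct R as [-> Hv]. destruct (split_erase _ _ _ Sp) as [E1 E2].
    exists r1, r2. simpl. rewrite E1, E2. auto.
  - subst. exists r1, r2. simpl. auto.
  - destruct R as (c2 & Sc & Hv). destruct (split_assoc _ _ _ _ _ Sc Sp) as (c' & A & B).
    exists c', r2. simpl. eauto.
  - destruct R as (c2 & Sc & Hv).
    destruct (split_assoc _ _ _ _ _ Sc (split_comm _ _ _ Sp)) as (c' & A & B).
    exists r1, c'. simpl. split; [reflexivity | split; eauto using split_comm].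
Qed.

Lemma subst_ctx_split_app pre s c1 c v q1 q2 :
  split (pre ++ s :: c1) q1 q2 -> subst_ctx s c1 c v ->
  exists p1 p2 s1 s2 r1 r2 c1' c2',
    q1 = p1 ++ s1 :: r1 /\ q2 = p2 ++ s2 :: r2 /\
    length p1 = length pre /\ length p2 = length pre /\
    subst_ctx s1 r1 c1' v /\ subst_ctx s2 r2 c2' v /\
    split (pre ++ c) (p1 ++ c1') (p2 ++ c2').
Proof.
  intros H R. destruct (split_app_inv _ _ _ _ H) as (p1 & p2 & d1 & d2 & -> & -> & S1 & S2).
  destruct (split_length _ _ _ S1) as [L1 L2].
  inversion S2 as [|? s1 s2 ? r1 r2 Hs Hr]; subst.
  destruct (subst_ctx_split _ _ _ _ _ _ _ _ R Hs Hr) as (c' & c'' & R1 & R2 & Sp).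
  exists p1, p2, s1, s2, r1, r2, c', c''. repeat split; auto. apply split_app; auto.
Qed.

Lemma subst_ctx_erase s c1 c v :
  subst_ctx s c1 c v -> subst_ctx (erase_slot s) (erase c1) (erase c) v.
Proof.
  destruct s; simpl.
  - intros [-> H]. rewrite erase_idem. auto.
  - intros (c2 & Sp & _). symmetry. apply (split_erase _ _ _ Sp).
  - intros ->; auto.
Qed.

Lemma subst_var_nonlin pre s c1 c v x T :
  nth_error (pre ++ s :: c1) x = Some (SNon T) -> nolin (pre ++ s :: c1) ->
  subst_ctx s c1 c v -> typed (pre ++ c) (upn (length pre) (scons v Var) x) T.
Proof.
  intros Hx N R.
  pose proof (nolin_subst_ctx _ _ _ _ _ N R) as Nc.
  destruct (shift_at_cover (length pre) x) as [->|[y ->]].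
  - rewrite nth_error_at_length in Hx. injection Hx as ->; simpl in R. destruct R as [-> Hv].
    destruct (nolin_app _ _ Nc) as [Npre Nc1].
    rewrite upn_at. apply weaken_nolin; auto. rewrite <- (erase_nolin c1); auto.
  - rewrite upn_shift_at. apply T_VarN; auto.
    rewrite (subst_ctx_nonlin _ _ _ _ R (nolin_middle _ _ _ N)).
    rewrite <- (nth_error_shift_at pre c1 s). exact Hx.
Qed.

Lemma subst_var_lin pre s c1 c v x T :
  nth_error (pre ++ s :: c1) x = Some (SLin T) ->
  (forall y U, y <> x -> nth_error (pre ++ s :: c1) y <> Some (SLin U)) ->
  subst_ctx s c1 c v -> typed (pre ++ c) (upn (length pre) (scons v Var) x) T.
Proof.
  intros Hx Hothers R.
  destruct (shift_at_cover (length pre) x) as [->|[y ->]].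
  - rewrite nth_error_at_length in Hx. injection Hx as ->; simpl in R. destruct R as (c2 & Sp & Hv).
    assert (N : nolin (pre ++ c1)).
    { intros z U. rewrite <- (nth_error_shift_at pre c1 (SLin T)).
      apply Hothers, shift_at_neq. }
    destruct (nolin_app _ _ N) as [Npre Nc1].
    rewrite (split_nolin_l _ _ _ Sp Nc1), upn_at. apply weaken_nolin; auto.
  - assert (Ns : nonlin s).
    { intros U ->. apply (Hothers (length pre) U).
      + intros E. apply (shift_at_neq (length pre) y). auto.
      + apply nth_error_at_length. }
    rewrite (subst_ctx_nonlin _ _ _ _ R Ns), upn_shift_at. apply T_VarL.
    + rewrite <- (nth_error_shift_at pre c1 s). exact Hx.
    + intros y' U Hy. rewrite <- (nth_error_shift_at pre c1 s). apply Hothers.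
      intros E. apply Hy. eapply shift_at_inj; eauto.
Qed.

Lemma subst_at c0 t T : typed c0 t T -> forall pre s c1 c v,
  c0 = pre ++ s :: c1 -> subst_ctx s c1 c v ->
  typed (pre ++ c) (subst (upn (length pre) (scons v Var)) t) T.
Proof.
  induction 1; intros pre s0 k1 k v -> R; simpl;
    try solve [ constructor; eapply nolin_subst_ctx; eauto | econstructor; eauto ].
  - eapply subst_var_nonlin; eauto.
  - eapply subst_var_lin; eauto.
  - destruct (subst_ctx_split_app _ _ _ _ _ _ _ H R)
      as (p1 & p2 & s1 & s2 & r1 & r2 & c1' & c2' & -> & -> & L1 & L2 & R1 & R2 & Sp).
    apply T_If with (1 := Sp); [rewrite <- L1 | rewrite <- L2 ..]; eauto.
  - destruct (subst_ctx_split_app _ _ _ _ _ _ _ H R)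
      as (p1 & p2 & s1 & s2 & r1 & r2 & c1' & c2' & -> & -> & L1 & L2 & R1 & R2 & Sp).
    apply T_Tens with (1 := Sp); [rewrite <- L1 | rewrite <- L2]; eauto.
  - destruct (subst_ctx_split_app _ _ _ _ _ _ _ H R)
      as (p1 & p2 & s1 & s2 & r1 & r2 & c1' & c2' & -> & -> & L1 & L2 & R1 & R2 & Sp).
    eapply T_Let with (1 := Sp); [rewrite <- L1 | rewrite <- L2; eauto].
    exact (IHtyped1 (SLin T2 :: SLin T1 :: p1) s1 r1 c1' v eq_refl R1).
  - constructor. exact (IHtyped (SNon T :: pre) s0 k1 k v eq_refl R).
  - apply T_AppN with T'; eauto.
    rewrite erase_app, <- (erase_length pre).
    eapply IHtyped2; [rewrite erase_app; reflexivity | apply subst_ctx_erase, R].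
  - constructor. exact (IHtyped (SLin T :: pre) s0 k1 k v eq_refl R).
  - destruct (subst_ctx_split_app _ _ _ _ _ _ _ H R)
      as (p1 & p2 & s1 & s2 & r1 & r2 & c1' & c2' & -> & -> & L1 & L2 & R1 & R2 & Sp).
    eapply T_AppL with (1 := Sp); [rewrite <- L1 | rewrite <- L2]; eauto.
  - apply T_BindN with T1.
    + rewrite erase_app, <- (erase_length pre).
      eapply IHtyped1; [rewrite erase_app; reflexivity | apply subst_ctx_erase, R].
    + exact (IHtyped2 (SNon T1 :: pre) s0 k1 k v eq_refl R).
  - destruct (subst_ctx_split_app _ _ _ _ _ _ _ H R)
      as (p1 & p2 & s1 & s2 & r1 & r2 & c1' & c2' & -> & -> & L1 & L2 & R1 & R2 & Sp).
    eapply T_BindL with (1 := Sp); [rewrite <- L1; eauto | rewrite <- L2].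
    exact (IHtyped2 (SLin T1 :: p2) s2 r2 c2' v eq_refl R2).
Qed.

Lemma subst1_typed s c1 c v t T :
  typed (s :: c1) t T -> subst_ctx s c1 c v -> typed c (subst1 v t) T.
Proof. intros H R. exact (subst_at _ _ _ H [] s c1 c v eq_refl R). Qed.

(** * Preservation *)

Lemma typed_App_inv c f a T : typed c (App f a) T ->
  (exists U, typed c f (TArrow U T) /\ typed (erase c) a U) \/
  (exists c1 c2 U, split c c1 c2 /\ typed c1 f (TLolli U T) /\ typed c2 a U).
Proof. inversion 1; subst; [left | right]; eauto 6. Qed.

Lemma beta_preserve c e v T : typed c (App (Lam e) v) T -> typed c (subst1 v e) T.
Proof.
  intros H. destruct (typed_App_inv _ _ _ _ H) as [(U & Hf & Hv) | (c1 & c2 & U & Sp & Hf & Hv)];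
    inversion Hf; subst; (eapply subst1_typed; [eassumption | simpl; eauto]).
Qed.

Lemma fix_preserve c T' e T :
  typed c (App (Fix T') e) T -> typed c (App e (App (Fix T') e)) T.
Proof.
  intros H. destruct (typed_App_inv _ _ _ _ H) as [(U & Hf & He) | (c1 & c2 & U & Sp & Hf & He)];
    inversion Hf; subst.
  apply T_AppN with T; [rewrite <- (erase_nolin c) | apply T_AppN with (TArrow T T)]; auto.
  - constructor. apply nolin_erase.
  - rewrite erase_idem. exact He.
Qed.

Lemma typed_LetT_inv c a e T : typed c (LetT a e) T ->
  exists c1 c2 T1 T2, split c c1 c2 /\ typed (SLin T2 :: SLin T1 :: c1) e T /\
    typed c2 a (TTensor T1 T2).
Proof. inversion 1; eauto 8. Qed.

Lemma typed_Tens_inv c a b T : typed c (Tens a b) T ->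
  exists c1 c2 T1 T2, T = TTensor T1 T2 /\ split c c1 c2 /\ typed c1 a T1 /\ typed c2 b T2.
Proof. inversion 1; eauto 8. Qed.

Lemma let_preserve c e1 e2 e T :
  typed c (LetT (Tens e1 e2) e) T -> typed c (subst2 e1 e2 e) T.
Proof.
  intros H. destruct (typed_LetT_inv _ _ _ _ H) as (c1 & c2 & T1 & T2 & Sp & He & Ht).
  destruct (typed_Tens_inv _ _ _ _ Ht) as (d1 & d2 & U1 & U2 & E & Sp2 & H1 & H2).
  injection E as <- <-.
  (* [e2] is substituted first, into a context that still holds [e1]'s slot. *)
  destruct (split_assoc _ _ _ _ _ (split_comm _ _ _ Sp) (split_comm _ _ _ Sp2)) as (c' & A & B).
  rewrite subst2_subst1. apply subst1_typed with (SLin T1) c'.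
  - apply subst1_typed with (SLin T2) (SLin T1 :: c1); [exact He|].
    exists (SNone :: d2). split.
    + constructor; [constructor | apply split_comm, B].
    + apply weaken; [exact H2 | intros U E; discriminate].
  - exists d1. auto.
Qed.

Lemma prim_app_preserve c p n r A T :
  (forall c' U, typed c' p U -> nolin c' /\ U = TLolli TNat A) ->
  (forall c', nolin c' -> typed c' r A) ->
  typed c (App p (Num n)) T -> typed c r T.
Proof.
  intros Hp Hr H.
  destruct (typed_App_inv _ _ _ _ H) as [(U & Hf & _) | (c1 & c2 & U & Sp & Hf & Hn)].
  - destruct (Hp _ _ Hf) as [_ E]. discriminate.
  - destruct (Hp _ _ Hf) as [N1 E]. injection E as -> ->.
    rewrite (split_nolin_l _ _ _ Sp N1). inversion Hn; auto.
Qed.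

Lemma head_preserve c t t' T : typed c t T -> head t t' -> typed c t' T.
Proof.
  intros Ht Hh; destruct Hh.
  (* in the order of [head]: succ/pred/iszero, if, projections, choice *)
  3-7: eapply prim_app_preserve with (3 := Ht);
    [ inversion 1; split; [assumption | reflexivity] | intros; constructor; assumption ].
  3-4: inversion Ht; subst; match goal with
    | Sp : split _ ?c1 _, Hb : typed ?c1 _ TBool |- _ =>
        inversion Hb; subst; rewrite (split_nolin_l _ _ _ Sp); assumption
    end.
  3-4: inversion Ht; subst; match goal with
    | Hp : typed _ (Pair _ _) _ |- _ => inversion Hp; subst; assumption
    end.
  4-5: inversion Ht; subst; assumption.
  - apply beta_preserve, Ht.
  - apply fix_preserve, Ht.
  - apply let_preserve, Ht.
Qed.

Lemma bind_val_preserve c v e T :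
  typed c (Bind (Val v) e) T -> typed c (App (Lam e) v) T.
Proof.
  inversion 1; subst; match goal with Hv : typed _ (Val _) _ |- _ => inversion Hv; subst end.
  - apply T_AppN with T1; [constructor |]; assumption.
  - eapply T_AppL; [apply split_comm; eassumption | constructor | ]; eassumption.
Qed.

Theorem proposition5 :
  forall (c : ctx) (e e' : term) (T : ty),
    typed c e T -> step e e' -> typed c e' T.
Proof.
  intros c e; revert c. induction e; intros c e' T Ht Hs; simpl in Hs;
    destruct Hs as [Hh | Hs]; try (eapply head_preserve; eauto; fail); try contradiction.
  - destruct Hs as [[a' [Ha ->]] | [_ [b' [Hb ->]]]]; inversion Ht; subst;
      solve [eapply T_AppN; eauto | eapply T_AppL; eauto].
  - destruct Hs as [a' [Ha ->]]; inversion Ht; subst. eapply T_If; eauto.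
  - destruct Hs as [a' [Ha ->]]; inversion Ht; subst. eapply T_Proj1; eauto.
  - destruct Hs as [a' [Ha ->]]; inversion Ht; subst. eapply T_Proj2; eauto.
  - destruct Hs as [a' [Ha ->]]; inversion Ht; subst. eapply T_Let; eauto.
  - destruct Hs as [a' [Ha ->]]; inversion Ht; subst. eapply T_Val; eauto.
  - destruct Hs as [[a' [Ha ->]] | Hbeta].
    + inversion Ht; subst; solve [eapply T_BindN; eauto | eapply T_BindL; eauto].
    + destruct e1; try contradiction. destruct Hbeta as [_ ->].
      apply bind_val_preserve, Ht.
Qed.
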